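(* For every sequence $(k_n)_{n\ge 2}$ with $k_n\in\{2,\dots,n\}$ and $k_n\to\infty$, there exist probability distributions $P,Q$ on $\mathbb{R}$ (not depending on $n$), each absolutely continuous with respect to the other, such that the optimal risk $R(T^* )$ in the weighted hidden clique problem with parameters $n,k_n,P,Q$ satisfies $R(T^* )\to 0$ as $n\to\infty$.
   Context: Weighted hidden clique model. For $n\ge 2$ and $k\in\{2,\dots,n\}$, let $E=\{(i,j):1\le i<j\le n\}$ and for $S\subseteq[n]$ let $E(S)=\{(i,j):i,j\in S,\ i<j\}$. The observation is $\mathbf{X}=(X_e)_{e\in E}$. Under $\mathcal{H}_0$ (law $\mathbb{P}_0$) the $X_e$ are i.i.d. $P$. Under $\mathcal{H}_1$ (law $\mathbb{P}_1$) a uniformly random $k$-subset $S^*\subseteq[n]$ is chosen and, conditionally on $S^*$, the $X_e$ are independent with $X_e\sim Q$ for $e\in E(S^* )$ and $X_e\sim P$ otherwise. The risk of a test $T:\mathbb{R}^{\binom n2}\to\{0,1\}$ is $R(T)=\mathbb{P}_0(T=1)+\mathbb{P}_1(T=0)$, and $R(T^* )=\inf_T R(T)$ is the optimal risk. *)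

From HB Require Import structures.
From mathcomp Require Import all_boot all_order all_algebra.
From mathcomp Require Import all_classical all_reals all_analysis.
Set Implicit Arguments. Unset Strict Implicit. Unset Printing Implicit Defensive.
Import Order.TTheory GRing.Theory Num.Theory.
Local Open Scope classical_set_scope.
Local Open Scope ring_scope.

Definition edge (n : nat) := {e : 'I_n * 'I_n | (e.1 < e.2)%N}.

(* An observation X = (X_e)_{e in E} is encoded as a #|E|.-tuple of reals,
   whose i-th coordinate is X_(enum_val i), i.e. coordinates are listed in
   the order [enum (edge n)]. The tuple type carries the product
   sigma-algebra (generated by the coordinate projections). *)
Definition nE (n : nat) := #|{: edge n}|.
Definition obs (R : realType) (n : nat) := (nE n).-tuple R.

(* Iterated integral w.r.t. a finite sequence of (independent) probability
   measures: integrates f : seq R -> \bar R against mu_1 (x) ... (x) mu_m. *)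
Fixpoint iter_int (R : realType) (mus : seq (probability R R))
    (f : seq R -> \bar R) : \bar R :=
  match mus with
  | [::] => f [::]
  | mu :: mus' => (\int[mu]_x iter_int mus' (fun s => f (x :: s)))%E
  end.

Definition obs_prob (R : realType) (n : nat) (mus : seq (probability R R))
    (A : set (obs R n)) : \bar R :=
  iter_int mus (fun s =>
    (\1_A (insubd (nseq_tuple (nE n) (0 : R)) s : obs R n))%:E).

Definition laws0 (R : realType) (n : nat) (P : probability R R) :=
  [seq P | e <- enum {: edge n}].

Definition lawsS (R : realType) (n : nat) (P Q : probability R R)
    (S : {set 'I_n}) :=
  [seq (if ((val e).1 \in S) && ((val e).2 \in S) then Q else P)
   | e <- enum {: edge n}].

Definition P0 (R : realType) (n : nat) (P : probability R R)
    (A : set (obs R n)) : \bar R := obs_prob (laws0 n P) A.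

Definition P1 (R : realType) (n k : nat) (P Q : probability R R)
    (A : set (obs R n)) : \bar R :=
  (((('C(n, k))%:R)^-1)%:E *
   \sum_(S : {set 'I_n} | #|S| == k) obs_prob (lawsS P Q S) A)%E.

(* Risk of a test T : R^{binom n 2} -> {0,1} (encoded as bool, true = 1). *)
Definition risk (R : realType) (n k : nat) (P Q : probability R R)
    (T : obs R n -> bool) : \bar R :=
  (@P0 R n P [set x | T x] + @P1 R n k P Q [set x | ~~ T x])%E.

Definition opt_risk (R : realType) (n k : nat) (P Q : probability R R)
    : \bar R :=
  ereal_inf [set @risk R n k P Q T | T in
              [set T : obs R n -> bool | measurable [set x | T x]]].

From HB Require Import structures.
From mathcomp Require Import all_boot all_order all_algebra.
From mathcomp Require Import all_classical all_reals all_analysis.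
From mathcomp Require Import ring lra.
Import Order.TTheory GRing.Theory Num.Theory measurable_realfun.
Set Implicit Arguments. Unset Strict Implicit.
Local Open Scope classical_set_scope.
Local Open Scope ring_scope.

(* P and Q are supported on the integers 0, 1, 2, ...: Q charges the atom j
   with mass of order 2^-j, whereas P charges it with a far smaller mass,
   chosen according to how fast k_n grows.  With a = floor(log_4 k_n), reject
   H0 as soon as some edge carries the value a.  Under H0 this happens with
   probability at most #E * P{a} <= 2^-a, because n is small compared with the
   decay of P at a; under H1 the k_n - 1 planted edges at a fixed vertex of the
   clique all miss a with probability at most (1 - Q{a})^(k_n - 1) <= 2 * 2^-a.
   Since a grows with n, the risk tends to 0. *)

Section product_of_laws.
Variable R : realType.
Implicit Types (mu : probability R R) (mus : seq (probability R R)).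

Lemma probability_fineK mu (A : set R) : measurable A -> mu A = (fine (mu A))%:E.
Proof.
move=> mA; rewrite fineK // ge0_fin_numE //.
exact: le_lt_trans (probability_le1 mu mA) (ltry 1).
Qed.

Lemma fine_probability01 mu (A : set R) : measurable A -> 0 <= fine (mu A) <= 1.
Proof.
move=> mA; rewrite fine_ge0 //= -lee_fin -probability_fineK //.
exact: probability_le1.
Qed.

Lemma fine_probability_setC1 mu (a : R) :
  fine (mu [set~ a]) = 1 - fine (mu [set a]).
Proof.
by rewrite probability_setC // (probability_fineK mu (measurable_set1 a)).
Qed.

Lemma fine_probability01_setC1 mu (a : R) : 0 <= fine (mu [set~ a]) <= 1.
Proof. exact: fine_probability01 (measurableC (measurable_set1 a)). Qed.

Definition avoids (a : R) (s : seq R) := all (fun y => y != a) s.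

Definition avoid_prob mus (a : R) := \prod_(mu <- mus) fine (mu [set~ a]).

Lemma avoid_prob01 mus a : 0 <= avoid_prob mus a <= 1.
Proof.
apply/andP; split; last exact: prodr_ile1 (fun mu _ => fine_probability01_setC1 mu a).
by apply: prodr_ge0 => mu _; case/andP: (fine_probability01_setC1 mu a).
Qed.

Lemma integral_if_neq mu (a al be : R) : 0 <= al -> 0 <= be ->
  (\int[mu]_x (if x != a then al else be)%:E)%E =
  (al * fine (mu [set~ a]) + be * (1 - fine (mu [set~ a])))%:E.
Proof.
move=> al0 be0.
have mC : measurable [set~ a] := measurableC (measurable_set1 a).
have ind_ge0 (c : R) (A : set R) : 0 <= c -> forall x, (0 <= (c * \1_A x)%:E)%E.
  by move=> c0 x; rewrite lee_fin mulr_ge0.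
rewrite (eq_integral (fun x => (al * \1_[set~ a] x)%:E + (be * \1_[set a] x)%:E)%E).
  rewrite ge0_integralD //; last 4 first.
  - by move=> x _; apply: ind_ge0.
  - by apply/measurable_EFinP/measurable_funM => //; exact: measurable_indic.
  - by move=> x _; apply: ind_ge0.
  - by apply/measurable_EFinP/measurable_funM => //; exact: measurable_indic.
  rewrite (integralZl_indic _ (fun _ => [set~ a])) // ?integral_indic ?setIT //;
    last by move=> /lt_geF; rewrite al0.
  rewrite (integralZl_indic _ (fun _ => [set a])) // ?integral_indic ?setIT //;
    last by move=> /lt_geF; rewrite be0.
  have e1 : mu [set a] = (1 - fine (mu [set~ a]))%:E.
    by rewrite fine_probability_setC1 subKr -probability_fineK.
  transitivity (al%:E * (fine (mu [set~ a]))%:E + be%:E * (1 - fine (mu [set~ a]))%:E)%E;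
    first by rewrite -e1 -probability_fineK.
  by rewrite -!EFinM -EFinD.
move=> x _; rewrite !indicE; case: (eqVneq x a) => [->|xa].
  by rewrite memNset ?mem_set //= ?mulr0 ?mulr1 ?add0e.
by rewrite mem_set ?memNset //= ?mulr0 ?mulr1 ?adde0 //; apply/eqP.
Qed.

Lemma iter_int_ext mus (f g : seq R -> \bar R) :
  (forall s, size s = size mus -> f s = g s) -> iter_int mus f = iter_int mus g.
Proof.
elim: mus f g => [|mu mus IH] f g fg /=; first exact: fg.
by apply: eq_integral => x _; apply: IH => s hs; apply: fg; rewrite /= hs.
Qed.

Lemma iter_int_ge0 mus (f : seq R -> \bar R) :
  (forall s, (0 <= f s)%E) -> (0 <= iter_int mus f)%E.
Proof.
elim: mus f => [|mu mus IH] f f0 /=; first exact: f0.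
by apply: integral_ge0 => x _; apply: IH.
Qed.

Lemma iter_int_avoids mus a (u v : R) pre : 0 <= u -> 0 <= v ->
  iter_int mus (fun s => (if avoids a (pre ++ s) then u else v)%:E) =
  (if avoids a pre then v + (u - v) * avoid_prob mus a else v)%:E.
Proof.
move=> u0 v0; elim: mus pre => [|mu mus IH] pre /=.
  by rewrite cats0 /avoid_prob big_nil; case: ifP => _ //; congr (_%:E); ring.
have IHx x : iter_int mus (fun s => (if avoids a (pre ++ x :: s) then u else v)%:E)
    = (if avoids a (rcons pre x) then v + (u - v) * avoid_prob mus a else v)%:E.
  by rewrite -IH; congr iter_int; apply: funext => s; rewrite cat_rcons.
under eq_integral => x _ do rewrite IHx /avoids all_rcons -/(avoids a pre).
case: (avoids a pre); last first.
  under eq_integral => x _ do rewrite andbF.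
  by rewrite integral_cst //= probability_setT mule1.
under eq_integral => x _ do rewrite andbT.
have /andP[p0 p1] := avoid_prob01 mus a.
rewrite integral_if_neq //; last first.
  rewrite (_ : v + _ = (1 - avoid_prob mus a) * v + avoid_prob mus a * u); last by ring.
  by rewrite addr_ge0 // mulr_ge0 // subr_ge0.
by rewrite /avoid_prob big_cons; congr (_%:E); ring.
Qed.

End product_of_laws.

Section hit_test.
Variable R : realType.
Implicit Types (P Q : probability R R) (mus : seq (probability R R)).

Definition hit_test n (a : R) (x : obs R n) := ~~ avoids a x.

Lemma measurable_hit_test n (a : R) : measurable [set x : obs R n | hit_test a x].
Proof.
rewrite (_ : [set x | _] = ~` \bigcap_(i in [set: 'I_(nE n)])
    ([set: obs R n] `&` (fun x : obs R n => tnth x i) @^-1` [set~ a])).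
  apply/measurableC/fin_bigcap_measurable; first exact: finite_finset.
  by move=> i _; apply: measurable_tnth => //; exact: measurableC (measurable_set1 a).
apply/seteqP; split => x /=.
  by move=> /negP xa xa'; apply: xa; apply/all_tnthP => i; have [_ /= /eqP] := xa' i I.
move=> xa; apply/negP => /all_tnthP xa'; apply: xa => i _; split => //=.
exact/eqP/xa'.
Qed.

Lemma obs_prob_pred n mus (b : seq R -> bool) : size mus = nE n ->
  obs_prob mus [set x : obs R n | b x] = iter_int mus (fun s => (b s)%:R%:E).
Proof.
move=> mus_n; apply: iter_int_ext => s; rewrite mus_n => sn.
have sK : tval (insubd (nseq_tuple (nE n) (0 : R)) s) = s.
  by rewrite insubdK // unfold_in sn.
rewrite indicE; case: (boolP (b s)) => bs.
  by rewrite mem_set //= sK.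
by rewrite memNset //= sK; exact/negP.
Qed.

Lemma obs_prob_avoids n mus (a : R) : size mus = nE n ->
  obs_prob mus [set x : obs R n | avoids a x] = (avoid_prob mus a)%:E.
Proof.
move=> mus_n; rewrite obs_prob_pred //.
have := iter_int_avoids mus a [::] ler01 (lexx 0).
rewrite /= subr0 add0r mul1r => <-.
by congr iter_int; apply: funext => s; case: avoids.
Qed.

Lemma obs_prob_hit_test n mus (a : R) : size mus = nE n ->
  obs_prob mus [set x : obs R n | hit_test a x] = (1 - avoid_prob mus a)%:E.
Proof.
move=> mus_n; rewrite (@obs_prob_pred n mus (fun s => ~~ avoids a s)) //.
have := iter_int_avoids mus a [::] (lexx 0) ler01.
rewrite /= sub0r mulN1r => <-.
by congr iter_int; apply: funext => s; rewrite /hit_test; case: avoids.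
Qed.

Lemma avoid_prob_laws0 n P (a : R) :
  avoid_prob (laws0 n P) a = fine (P [set~ a]) ^+ nE n.
Proof. by rewrite /avoid_prob big_map big_enum /= prodr_const. Qed.

Lemma card_clique_edges n (S : {set 'I_n}) :
  (#|S| - 1 <= #|[pred e : edge n | ((val e).1 \in S) && ((val e).2 \in S)]|)%N.
Proof.
have [->|[s0 s0S]] := set_0Vmem S; first by rewrite cards0.
pose f (t : 'I_n) : 'I_n * 'I_n := if (s0 < t)%N then (s0, t) else (t, s0).
have f_inj : {in S :\ s0 &, injective f}.
  move=> t1 t2; rewrite !inE => /andP[t1s0 _] /andP[t2s0 _]; rewrite /f.
  by case: ltnP => l1; case: ltnP => l2 [] // e1 e2; subst; rewrite eqxx in t1s0 t2s0.
have f_edge t : t \in S :\ s0 ->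
    [&& ((f t).1 < (f t).2)%N, (f t).1 \in S & (f t).2 \in S].
  rewrite !inE => /andP[ts0 tS]; rewrite /f; case: (ltnP s0 t) => l /=.
    by rewrite l s0S tS.
  rewrite tS s0S !andbT ltn_neqAle l andbT.
  by apply: contra ts0 => /eqP h; apply/eqP/val_inj.
rewrite (cardsD1 s0 S) s0S add1n subn1 /= -(card_in_imset f_inj).
rewrite -(card_imset (mem [pred e : edge n | ((val e).1 \in S) && ((val e).2 \in S)]) val_inj).
apply/subset_leq_card/fintype.subsetP => _ /imsetP[t tS ->].
have /and3P[lt1 in1 in2] := f_edge t tS.
by apply/imsetP; exists (exist _ (f t) lt1 : edge n); rewrite // inE /= in1 in2.
Qed.

Lemma avoid_prob_lawsS n P Q (S : {set 'I_n}) (a : R) :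
  avoid_prob (lawsS P Q S) a <= fine (Q [set~ a]) ^+ (#|S| - 1).
Proof.
have mu01 (mu : probability R R) := fine_probability01_setC1 mu a.
rewrite /avoid_prob big_map big_enum /=.
set c := fun e : edge n => ((val e).1 \in S) && ((val e).2 \in S).
rewrite (bigID c) /=.
under eq_bigr => e ce do rewrite (ce : (_ && _)).
under [X in _ * X <= _]eq_bigr => e ce do rewrite (negbTE (ce : ~~ (_ && _))).
apply: (@le_trans _ _ (\prod_(e | c e) fine (Q [set~ a]))).
  rewrite -[X in _ <= X]mulr1; apply: ler_pM => //; try exact: prodr_ile1.
  - by apply: prodr_ge0 => e _; case/andP: (mu01 Q).
  - by apply: prodr_ge0 => e _; case/andP: (mu01 P).
have /andP[q0 q1] := mu01 Q.
by rewrite prodr_const; apply: ler_wiXn2l => //; exact: card_clique_edges.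
Qed.

Lemma risk_hit_test n k P Q (a : R) : (k <= n)%N ->
  (risk k P Q (@hit_test n a) <=
   (1 - fine (P [set~ a]) ^+ nE n + fine (Q [set~ a]) ^+ (k - 1))%:E)%E.
Proof.
have size_laws (f : edge n -> probability R R) : size [seq f e | e <- enum {: edge n}] = nE n.
  by rewrite size_map -cardE.
move=> kn; rewrite /risk /P0 obs_prob_hit_test ?size_laws // avoid_prob_laws0.
rewrite [in X in (_ <= X)%E]EFinD.
apply: leeD => //; rewrite /P1.
rewrite (_ : [set x | ~~ hit_test a x] = [set x : obs R n | avoids a x]); last first.
  by apply/seteqP; split => x /=; rewrite /hit_test negbK.
under eq_bigr => S _ do rewrite obs_prob_avoids ?size_laws //.
rewrite sumEFin -EFinM lee_fin.
have Cpos : (0 < 'C(n, k))%N by rewrite bin_gt0.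
apply: (@le_trans _ _ (('C(n, k)%:R)^-1 *
    \sum_(S : {set 'I_n} | #|S| == k) fine (Q [set~ a]) ^+ (k - 1))).
  apply: ler_wpM2l; first by rewrite invr_ge0.
  by apply: ler_sum => S /eqP <-; exact: avoid_prob_lawsS.
rewrite sumr_const -cardsE card_draws card_ord -[X in _ * X]mulr_natr mulrCA mulVf ?mulr1 //.
by rewrite pnatr_eq0 -lt0n.
Qed.

Lemma risk_ge0 n k P Q (T : obs R n -> bool) : (0 <= risk k P Q T)%E.
Proof.
have obs_prob_ge0 mus A : (0 <= @obs_prob R n mus A)%E.
  by apply: iter_int_ge0 => s; rewrite lee_fin.
apply: adde_ge0; first exact: obs_prob_ge0.
apply: mule_ge0; first by rewrite lee_fin invr_ge0.
by apply: sume_ge0 => S _; exact: obs_prob_ge0.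
Qed.

End hit_test.

Section nat_law.
Variables (R : realType) (w : nat -> R).
Hypothesis w_gt0 : forall j, 0 < w j.
Hypothesis w_le : forall j, w j <= 1 / (2 ^ j.+1)%:R.
Hypothesis w0 : w 0 = 1 / 2.

Let w_ge0 j : 0 <= w j. Proof. exact: ltW. Qed.

Definition nat_atoms : {measure set R -> \bar R} :=
  mseries (fun j => mscale (NngNum (w_ge0 j)) \d_(j%:R : R)) 0.

Lemma nat_atomsE A : nat_atoms A = (\sum_(0 <= j <oo) (w j * \1_A (j%:R : R))%:E)%E.
Proof. exact: eq_eseriesr. Qed.

Let atom_ge0 A j : (0 <= (w j * \1_A (j%:R : R))%:E)%E.
Proof. by rewrite lee_fin mulr_ge0. Qed.

Lemma nat_atoms_setT_le1 : (nat_atoms setT <= 1)%E.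
Proof.
rewrite nat_atomsE; apply: (@le_trans _ _ (\sum_(0 <= j <oo) (1 / (2 ^ (j + 1))%:R)%:E)%E).
  apply: lee_nneseries => [j _ _|j _]; first exact: atom_ge0.
  by rewrite lee_fin indicT mulr1 addn1.
have := @cvg_geometric_eseries_half R 1 0.
by rewrite expr0 divr1 => /cvg_lim <-.
Qed.

Lemma nat_atoms_ge A j : ((w j * \1_A (j%:R : R))%:E <= nat_atoms A)%E.
Proof.
rewrite nat_atomsE; apply: le_trans (nneseries_lim_ge j.+1 (fun n _ _ => atom_ge0 A n)).
rewrite big_nat_recr //= -[X in (X <= _)%E]add0e leeD //.
by apply: sume_ge0 => i _; exact: atom_ge0.
Qed.

Lemma nat_atoms_eq0 A : (forall j, ~ A (j%:R : R)) -> nat_atoms A = 0%E.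
Proof.
move=> Aj; rewrite nat_atomsE; apply: eseries0 => j _ _.
by rewrite indicE memNset ?mulr0 //; exact: Aj.
Qed.

Lemma nat_atoms1 a : nat_atoms [set (a%:R : R)] = (w a)%:E.
Proof.
have ja j : j != a -> (w j * \1_[set (a%:R : R)] j%:R)%:E = 0%E.
  by move=> ja; rewrite indicE memNset ?mulr0 //= => /eqP; rewrite eqr_nat; exact/negP.
rewrite nat_atomsE (nneseries_split 0 a.+1) => [|j _]; last exact: atom_ge0.
rewrite eseries0 ?adde0 => [|j]; last by rewrite add0n => aj _; apply: ja; rewrite gtn_eqF.
rewrite add0n big_nat_recr //= big1_seq ?add0e => [|j]; last first.
  by rewrite mem_index_iota => /andP[_ ja']; apply: ja; rewrite ltn_eqF.
by rewrite indicE mem_set // mulr1.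
Qed.

Definition nat_atoms_mass := fine (nat_atoms setT).

Lemma nat_atoms_mass_bounds : 1 / 2 <= nat_atoms_mass <= 1.
Proof.
have le1 := nat_atoms_setT_le1.
have ge12 : ((1 / 2)%:E <= nat_atoms setT)%E.
  by have := nat_atoms_ge setT 0; rewrite indicT mulr1 w0.
have fin : nat_atoms setT \is a fin_num.
  by rewrite ge0_fin_numE ?(le_lt_trans le1) ?ltry // (le_trans _ ge12) // lee_fin.
by rewrite /nat_atoms_mass -!lee_fin fineK // le1 ge12.
Qed.

Let mass_gt0 : 0 < nat_atoms_mass.
Proof. by have /andP[+ _] := nat_atoms_mass_bounds; apply: lt_le_trans. Qed.

Definition nat_law : probability R R := mnormalize nat_atoms \d_(0 : R).

Lemma nat_lawE A : nat_law A = (nat_atoms A * (nat_atoms_mass^-1)%:E)%E.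
Proof.
rewrite /nat_law /= /mnormalize; case: ifPn => // /orP[] /eqP mass.
  by move: mass_gt0; rewrite /nat_atoms_mass mass ltxx.
by move: nat_atoms_setT_le1; rewrite mass leNgt ltry.
Qed.

Lemma nat_law1_bounds a : w a <= fine (nat_law [set (a%:R : R)]) <= 2 * w a.
Proof.
rewrite nat_lawE nat_atoms1 /=; have /andP[m12 m1] := nat_atoms_mass_bounds.
have wa := w_gt0 a; have mass := mass_gt0.
rewrite ler_pdivlMr // ler_pdivrMr //.
apply/andP; split; nra.
Qed.

Lemma nat_law_eq0 A : measurable A ->
  nat_law A = 0%E <-> forall j, ~ A (j%:R : R).
Proof.
move=> mA; split => [|Aj]; last by rewrite nat_lawE nat_atoms_eq0 // mul0e.
move=> A0 j Aj; have := nat_atoms_ge A j; rewrite indicE mem_set // mulr1.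
have fin : nat_atoms A \is a fin_num.
  rewrite ge0_fin_numE // (le_lt_trans _ (ltry 1)) //.
  by apply: le_trans nat_atoms_setT_le1; apply: le_measure; rewrite ?inE.
move: A0; rewrite nat_lawE -(fineK fin) -EFinM => /eqP.
rewrite eqe mulf_eq0 invr_eq0 (gt_eqF mass_gt0) orbF => /eqP ->.
by rewrite lee_fin leNgt w_gt0.
Qed.

End nat_law.

Lemma nat_law_dominates (R : realType) (w1 w2 : nat -> R)
    (w1_gt0 : forall j, 0 < w1 j) (w2_gt0 : forall j, 0 < w2 j) :
  (forall j, w1 j <= 1 / (2 ^ j.+1)%:R) -> w1 0 = 1 / 2 ->
  (forall j, w2 j <= 1 / (2 ^ j.+1)%:R) -> w2 0 = 1 / 2 ->
  nat_law w1_gt0 `<< nat_law w2_gt0.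
Proof.
move=> w1_le w10 w2_le w20; apply/null_content_dominatesP => A mA.
by move=> /(nat_law_eq0 w2_gt0 w2_le w20 mA) A0; exact/(nat_law_eq0 w1_gt0 w1_le w10 mA).
Qed.

Section elementary_bounds.
Variable R : realFieldType.

Lemma union_bound_expr (p : R) (N : nat) : 0 <= p <= 1 -> 1 - (1 - p) ^+ N <= N%:R * p.
Proof.
move=> /andP[p0 p1]; elim: N => [|N IH]; first by rewrite expr0 subrr mul0r.
have h0 : 0 <= (1 - p) ^+ N by rewrite exprn_ge0 // subr_ge0.
have h1 : (1 - p) ^+ N <= 1 by apply: exprn_ile1; lra.
rewrite exprS -natr1; nra.
Qed.

Lemma expr_one_sub_mul_le1 (q : R) (K : nat) : 0 <= q <= 1 ->
  (1 - q) ^+ K * (1 + K%:R * q) <= 1.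
Proof.
move=> /andP[q0 q1]; elim: K => [|K IH]; first by rewrite expr0 mul0r addr0 mul1r.
have h0 : 0 <= (1 - q) ^+ K by rewrite exprn_ge0 // subr_ge0.
have hK : 0 <= K%:R :> R by [].
have hh : 0 <= (1 - q) ^+ K * (q * q * (K%:R + 1)) by rewrite !mulr_ge0 ?addr_ge0.
rewrite exprS -natr1.
have -> : (1 - q) * (1 - q) ^+ K * (1 + (K%:R + 1) * q) =
  (1 - q) ^+ K * (1 + K%:R * q) - (1 - q) ^+ K * (q * q * (K%:R + 1)) by ring.
lra.
Qed.

Lemma expr_one_sub_le (q x : R) (K : nat) : 0 <= q <= 1 -> 1 <= x ->
  1 <= 2 * x * q -> x ^+ 2 - 1 <= K%:R -> (1 - q) ^+ K <= 2 / x.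
Proof.
move=> q01 x1 xq xK.
have z1 := expr_one_sub_mul_le1 K q01.
have z0 : 0 <= (1 - q) ^+ K by case/andP: q01 => _ q1; rewrite exprn_ge0 // subr_ge0.
have x_le : x <= 2 * (1 + K%:R * q).
  have : K%:R * 1 <= K%:R * (2 * x * q) by apply: ler_wpM2l.
  rewrite expr2 in xK; nra.
rewrite ler_pdivlMr; [nra | lra].
Qed.

End elementary_bounds.

Section vanishing_risk.
Variables (R : realType) (k thr : nat -> nat).
Hypothesis k_range : forall n, (2 <= n)%N -> (2 <= k n <= n)%N.
Hypothesis k_ge : forall M n, (thr M <= n)%N -> (M <= k n)%N.

Definition level n := trunc_log 4 (k n).

Definition weightQ (j : nat) : R := 1 / (2 ^ j.+1)%:R.

(* When [level n = j >= 1] we have [n < thr (4 ^ j.+1)], so the squared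
   denominator exceeds the number [nE n] of edges; the factor [j] makes
   [weightP 0 = 1 / 2]. *)
Definition weightP (j : nat) : R := weightQ j / ((j * thr (4 ^ j.+1)).+1 ^ 2)%:R.

Lemma weightQ_gt0 j : 0 < weightQ j.
Proof. by rewrite divr_gt0 // ltr0n expn_gt0. Qed.

Lemma weightP_gt0 j : 0 < weightP j.
Proof. by rewrite divr_gt0 ?weightQ_gt0 // ltr0n expn_gt0. Qed.

Lemma weightP_le j : weightP j <= 1 / (2 ^ j.+1)%:R.
Proof. by rewrite ler_pdivrMr ?ler_peMr ?ltr0n ?expn_gt0 ?ler1n // ltW ?weightQ_gt0. Qed.

Lemma weightP0 : weightP 0 = 1 / 2.
Proof. by rewrite /weightP /weightQ mul0n divr1. Qed.

Definition lawQ : probability R R := nat_law weightQ_gt0.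
Definition lawP : probability R R := nat_law weightP_gt0.

Lemma level_ge I n : (thr (4 ^ I) <= n)%N -> (I <= level n)%N.
Proof. by move=> /k_ge; exact: trunc_log_max. Qed.

Lemma lt_thr_level n : (n < thr (4 ^ (level n).+1))%N.
Proof. by rewrite ltnNge; apply/negP => /k_ge; rewrite leqNgt trunc_log_ltn. Qed.

Lemma lawP_hit_level n : (1 <= level n)%N ->
  1 - fine (lawP [set~ (level n)%:R]) ^+ nE n <= 1 / 2 ^+ level n.
Proof.
set a := level n => a1; rewrite fine_probability_setC1.
have := fine_probability01 lawP (measurable_set1 (a%:R : R)).
have /andP[_ p_le] := nat_law1_bounds weightP_gt0 weightP_le weightP0 a.
set p := fine _ => p01; apply: le_trans (union_bound_expr _ p01) _.
set m := (a * thr (4 ^ a.+1)).+1.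
have nEm : (nE n <= m ^ 2)%N.
  rewrite /nE card_sig (leq_trans (max_card _)) // card_prod card_ord mulnn.
  by rewrite leq_exp2r // ltnW // ltnS (leq_trans (ltnW (lt_thr_level n))) // leq_pmull.
apply: le_trans (_ : (m ^ 2)%:R * (2 * weightP a) <= _).
  by apply: ler_pM => //; [case/andP: p01 | rewrite ler_nat].
have m0 : m%:R != 0 :> R by rewrite pnatr_eq0.
rewrite /weightP /weightQ !natrX [(2 : R) ^+ a.+1]exprS.
by rewrite [X in X <= _](_ : _ = 1 / 2 ^+ a) //; field; rewrite m0 expf_neq0.
Qed.

Lemma lawQ_miss_level n : (2 <= n)%N ->
  fine (lawQ [set~ (level n)%:R]) ^+ (k n - 1) <= 2 / 2 ^+ level n.
Proof.
move=> n2; have /andP[k2 _] := k_range n2; set a := level n.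
have ka : (4 ^ a <= k n)%N by apply: trunc_logP => //; exact: leq_trans k2.
rewrite fine_probability_setC1; apply: expr_one_sub_le.
- exact: fine_probability01 (measurable_set1 _).
- by rewrite exprn_ege1 // ler1n.
- have /andP[q_ge _] := nat_law1_bounds weightQ_gt0 (fun j => lexx _) erefl a.
  apply: le_trans (_ : 2 * 2 ^+ a * weightQ a <= _).
    by rewrite /weightQ natrX exprS div1r mulfV // mulf_neq0 // expf_neq0.
  by apply: ler_wpM2l => //; rewrite mulr_ge0 // exprn_ge0.
- rewrite natrB; last exact: leq_trans k2.
  by rewrite lerD2r -exprM mulnC exprM -!natrX ler_nat.
Qed.

Lemma risk_hit_level n : (2 <= n)%N -> (1 <= level n)%N ->
  (risk (k n) lawP lawQ (@hit_test R n (level n)%:R) <= (3 / 2 ^+ level n)%:E)%E.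
Proof.
move=> n2 a1; have /andP[_ kn] := k_range n2.
apply: le_trans (risk_hit_test _ _ _ kn) _; rewrite lee_fin.
rewrite (_ : 3 / _ = 1 / 2 ^+ level n + 2 / 2 ^+ level n); last by rewrite -mulrDl.
by rewrite lerD ?lawP_hit_level ?lawQ_miss_level.
Qed.

Lemma opt_risk_level n : (2 <= n)%N -> (1 <= level n)%N ->
  (opt_risk n (k n) lawP lawQ <= (3 / 2 ^+ level n)%:E)%E.
Proof.
move=> n2 a1; apply: le_trans (risk_hit_level n2 a1).
by apply: ereal_inf_lbound; exists (@hit_test R n (level n)%:R) => //; exact: measurable_hit_test.
Qed.

Lemma level_cvgy : level @ \oo --> \oo.
Proof. by apply/cvgnyPge => I; exists (thr (4 ^ I)) => // n /level_ge. Qed.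

Lemma opt_risk_cvg0 : (fun n => opt_risk n (k n) lawP lawQ) @ \oo --> 0%E.
Proof.
have half_lt1 : `|2^-1 : R| < 1.
  by rewrite ger0_norm ?invr_lt1 ?invr_ge0 // ?ltr1n // unitfE.
have half_cvg0 : (fun n => (2^-1 : R) ^+ level n) @ \oo --> 0.
  by have := cvg_comp level (GRing.exp (2^-1 : R)) level_cvgy (cvg_expr half_lt1); apply.
have bound_cvg0 : (fun n => 3 * (2^-1 : R) ^+ level n) @ \oo --> 0.
  have := cvgM (cvg_cst (3 : R^o)) half_cvg0; rewrite mulr0; apply.
apply: (@squeeze_cvge _ _ _ _ (cst 0%E) _ (fun n => (3 * 2^-1 ^+ level n)%:E)).
- near=> n; rewrite exprVn opt_risk_level ?andbT.
  + by apply/ereal_infP => _ [T _ <-]; exact: risk_ge0.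
  + by near: n; exists 2%N.
  + by near: n; exists (thr (4 ^ 1)) => // n /level_ge.
- exact: cvg_cst.
- apply/cvg_EFin; first exact: nearW.
  by have := bound_cvg0; apply.
Unshelve. all: end_near.
Qed.

End vanishing_risk.

Theorem mainTheorem3 (R : realType) (k : nat -> nat) :
  (forall n : nat, (2 <= n)%N -> (2 <= k n <= n)%N) ->
  (forall M : nat, exists N : nat, forall n : nat, (N <= n)%N -> (M <= k n)%N) ->
  exists P Q : probability R R,
    P `<< Q /\ Q `<< P /\
    (fun n => opt_risk n (k n) P Q) @ \oo --> 0%E.
Proof.
move=> k_range /choice[thr k_ge].
have wQ_le j : weightQ R j <= 1 / (2 ^ j.+1)%:R by [].
exists (lawP R thr), (lawQ R); split; [|split].
- exact: nat_law_dominates (@weightP_le R thr) (weightP0 R thr) wQ_le erefl.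
- exact: nat_law_dominates wQ_le erefl (@weightP_le R thr) (weightP0 R thr).
- exact: opt_risk_cvg0.
Qed.
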